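(* An idempotent semiring $S$ belongs to $\mathbf{V}_{\mathcal{D}}$ if and only if $S$ is isomorphic to a spined product of an idempotent semiring $S_1\in\mathbf{V}_{\mathcal{L}}$ and an idempotent semiring $S_2\in\mathbf{V}_{\mathcal{R}}$ with respect to some distributive lattice $D$.
   Context: An idempotent semiring is an algebra $(S,+,\cdot)$ with $(S,+)$, $(S,\cdot)$ bands and both distributive laws; addition not assumed commutative. $\mathbf{V}_{\mathcal{D}}$, $\mathbf{V}_{\mathcal{L}}$, $\mathbf{V}_{\mathcal{R}}$ denote the varieties of idempotent semirings on which the Green's relation $\mathcal{D}^{\bullet}$ (resp. $\mathcal{L}^{\bullet}$, $\mathcal{R}^{\bullet}$) is the least distributive lattice congruence; equivalently, those satisfying $x\approx xyx+x+xyx$ (resp. $x\approx xy+x+xy$, $x\approx yx+x+yx$). Here $a\,\mathcal{D}^{\bullet}\,b$ iff $aba=a,\ bab=b$; $a\,\mathcal{L}^{\bullet}\,b$ iff $ab=a,\ ba=b$; $a\,\mathcal{R}^{\bullet}\,b$ iff $ab=b,\ ba=a$. Given semirings $S_1,S_2$, a distributive lattice $D$ and surjective homomorphisms $\phi_1:S_1\to D$, $\phi_2:S_2\to D$, the spined product of $S_1$ and $S_2$ with respect to $D$ is the subsemiring $\{(s_1,s_2)\in S_1\times S_2:\phi_1(s_1)=\phi_2(s_2)\}$ of $S_1\times S_2$. *)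

Record alg22 := Alg22 {
  car :> Type;
  sadd : car -> car -> car;
  smul : car -> car -> car
}.
Arguments sadd {a} _ _.
Arguments smul {a} _ _.

(* Idempotent semiring: (S,+) and (S,.) bands, both distributive laws;
   addition NOT assumed commutative. *)
Definition idem_semiring (S : alg22) : Prop :=
  (forall x y z : S, sadd x (sadd y z) = sadd (sadd x y) z) /\
  (forall x : S, sadd x x = x) /\
  (forall x y z : S, smul x (smul y z) = smul (smul x y) z) /\
  (forall x : S, smul x x = x) /\
  (forall x y z : S, smul x (sadd y z) = sadd (smul x y) (smul x z)) /\
  (forall x y z : S, smul (sadd x y) z = sadd (smul x z) (smul y z)).

Definition distr_lattice (D : alg22) : Prop :=
  idem_semiring D /\
  (forall x y : D, sadd x y = sadd y x) /\
  (forall x y : D, smul x y = smul y x) /\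
  (forall x y : D, sadd x (smul x y) = x) /\
  (forall x y : D, smul x (sadd x y) = x).

Definition in_VD (S : alg22) : Prop :=
  idem_semiring S /\
  forall x y : S, x = sadd (sadd (smul (smul x y) x) x) (smul (smul x y) x).
Definition in_VL (S : alg22) : Prop :=
  idem_semiring S /\
  forall x y : S, x = sadd (sadd (smul x y) x) (smul x y).
Definition in_VR (S : alg22) : Prop :=
  idem_semiring S /\
  forall x y : S, x = sadd (sadd (smul y x) x) (smul y x).

Definition is_hom (S T : alg22) (f : S -> T) : Prop :=
  (forall x y : S, f (sadd x y) = sadd (f x) (f y)) /\
  (forall x y : S, f (smul x y) = smul (f x) (f y)).

Definition surjective {A B : Type} (f : A -> B) : Prop :=
  forall b, exists a, f a = b.

(* f : S -> S1 x S2 is an isomorphism of S onto the spined product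
   {(s1,s2) | phi1 s1 = phi2 s2} of S1 and S2 w.r.t. D (the subsemiring of
   S1 x S2 with componentwise operations): f is a homomorphism into the
   direct product, injective, and its image is exactly the spined product. *)
Definition iso_onto_spined (S S1 S2 D : alg22)
    (phi1 : S1 -> D) (phi2 : S2 -> D) (f : S -> (S1 * S2)%type) : Prop :=
  (forall x y : S, f (sadd x y) =
      (sadd (fst (f x)) (fst (f y)), sadd (snd (f x)) (snd (f y)))) /\
  (forall x y : S, f (smul x y) =
      (smul (fst (f x)) (fst (f y)), smul (snd (f x)) (snd (f y)))) /\
  (forall x y : S, f x = f y -> x = y) /\
  (forall p : (S1 * S2)%type, phi1 (fst p) = phi2 (snd p) <-> exists x, f x = p).

From Stdlib Require Import List FunctionalExtensionality PropExtensionality ProofIrrelevance IndefiniteDescription.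
Import ListNotations.

(* For S in V_D, the kernels of the right and left regular actions are Green's
   relations R• and L•.  S embeds into S/R• × S/L•, since x is recovered from its two
   classes as x = x ⊗ x; S/R• lies in V_L and S/L• in V_R; and the image is the spined
   product over S/D•, which is a distributive lattice, because a pair of D•-related
   classes ([a], [b]) is realized by a ⊗ b.  All the identities needed come from the
   regularity x y x z x = x y z x of the multiplicative band, which in turn follows
   from the additive absorptions x ⊕ x y x = x = x y x ⊕ x.  Conversely, a product of
   members of V_L and V_R satisfies the V_D identity componentwise. *)

Infix "⊕" := sadd (at level 50, left associativity).
Infix "⊗" := smul (at level 40, left associativity).

Section IdempotentSemiring.
Context {S : alg22} (HS : idem_semiring S).

Lemma add_assoc (x y z : S) : x ⊕ (y ⊕ z) = x ⊕ y ⊕ z. Proof. apply HS. Qed.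
Lemma add_idem (x : S) : x ⊕ x = x. Proof. apply HS. Qed.
Lemma mul_assoc (x y z : S) : x ⊗ (y ⊗ z) = x ⊗ y ⊗ z. Proof. apply HS. Qed.
Lemma mul_idem (x : S) : x ⊗ x = x. Proof. apply HS. Qed.
Lemma mul_add_distr_l (x y z : S) : x ⊗ (y ⊕ z) = x ⊗ y ⊕ x ⊗ z. Proof. apply HS. Qed.
Lemma mul_add_distr_r (x y z : S) : (x ⊕ y) ⊗ z = x ⊗ z ⊕ y ⊗ z. Proof. apply HS. Qed.

(* [word_prod a [l1; ...; ln]] is the left-associated product [a ⊗ l1 ⊗ ... ⊗ ln],
   which is convertible to the product written out; it lets one delete a repeated
   block of factors anywhere in a product in a single step. *)
Fixpoint word_prod (a : S) (l : list S) : S :=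
  match l with nil => a | b :: l' => word_prod (a ⊗ b) l' end.

Lemma word_prod_app (a : S) (l1 l2 : list S) :
  word_prod a (l1 ++ l2) = word_prod (word_prod a l1) l2.
Proof. revert a; induction l1; simpl; auto. Qed.

Lemma word_prod_mul_l (c d : S) (l : list S) : word_prod (c ⊗ d) l = c ⊗ word_prod d l.
Proof.
  revert d; induction l as [|e l IH]; intro d; simpl; auto.
  rewrite <- mul_assoc. apply IH.
Qed.

Lemma word_prod_square (a : S) (p : list S) (u : S) (us q : list S) :
  word_prod a (p ++ u :: us ++ u :: us ++ q) = word_prod a (p ++ u :: us ++ q).
Proof.
  rewrite !word_prod_app. simpl. rewrite !word_prod_app. simpl. rewrite !word_prod_app.
  rewrite !word_prod_mul_l, <- mul_assoc, <- word_prod_mul_l, mul_idem.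
  reflexivity.
Qed.

Lemma word_prod_square_head (u : S) (us q : list S) :
  word_prod u (us ++ u :: us ++ q) = word_prod u (us ++ q).
Proof.
  rewrite !word_prod_app. simpl. rewrite word_prod_app, word_prod_mul_l, mul_idem.
  reflexivity.
Qed.

Definition below (u v : S) : Prop := u ⊕ v = u /\ v ⊕ u = u.

Lemma below_antisym (u v : S) : below u v -> below v u -> u = v.
Proof. intros [_ h] [h' _]. rewrite <- h. exact h'. Qed.

Lemma below_mul_l (c u v : S) : below u v -> below (c ⊗ u) (c ⊗ v).
Proof. intros [h1 h2]; split; rewrite <- mul_add_distr_l; congruence. Qed.

Lemma below_mul_r (c u v : S) : below u v -> below (u ⊗ c) (v ⊗ c).
Proof. intros [h1 h2]; split; rewrite <- mul_add_distr_r; congruence. Qed.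

Lemma eq_of_below_mul (u v : S) :
  below u v -> below v (u ⊗ v) -> below v (v ⊗ u) -> u ⊗ v ⊗ u = u -> u = v.
Proof.
  intros huv hv_uv hv_vu hu.
  assert (uv : u ⊗ v = v).
  { apply below_antisym; [|exact hv_uv].
    rewrite <- (mul_idem v) at 2. exact (below_mul_r v u v huv). }
  assert (vu : v ⊗ u = v).
  { apply below_antisym; [|exact hv_vu].
    rewrite <- (mul_idem v) at 2. exact (below_mul_l v u v huv). }
  rewrite <- hu, uv. exact vu.
Qed.

End IdempotentSemiring.

Definition greenR {S : alg22} (x y : S) : Prop := x ⊗ y = y /\ y ⊗ x = x.
Definition greenL {S : alg22} (x y : S) : Prop := x ⊗ y = x /\ y ⊗ x = y.
Definition greenD {S : alg22} (x y : S) : Prop := x ⊗ y ⊗ x = x /\ y ⊗ x ⊗ y = y.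

Section VarietyD.
Variable S : alg22.
Hypothesis HV : in_VD S.
Let HS : idem_semiring S := proj1 HV.

Lemma in_VD_identity (x y : S) : x = x ⊗ y ⊗ x ⊕ x ⊕ x ⊗ y ⊗ x.
Proof. apply HV. Qed.

Lemma add_sandwich (x y : S) : x ⊕ x ⊗ y ⊗ x = x.
Proof.
  pose proof (in_VD_identity x y) as hx. set (a := x ⊗ y ⊗ x) in *.
  rewrite hx at 1. rewrite <- (add_assoc HS _ a a), (add_idem HS). symmetry; exact hx.
Qed.

Lemma sandwich_add (x y : S) : x ⊗ y ⊗ x ⊕ x = x.
Proof.
  pose proof (in_VD_identity x y) as hx. set (a := x ⊗ y ⊗ x) in *.
  rewrite hx at 1. rewrite !(add_assoc HS), (add_idem HS). symmetry; exact hx.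
Qed.

Lemma below_sandwich (x w : S) : below x (x ⊗ w ⊗ x).
Proof. split; [apply add_sandwich | apply sandwich_add]. Qed.

Lemma mul_regular (x y z : S) : x ⊗ y ⊗ x ⊗ z ⊗ x = x ⊗ y ⊗ z ⊗ x.
Proof.
  (* Each order hypothesis is an instance of [below_sandwich] multiplied by suitable
     factors, after deleting squares in the band. *)
  apply (eq_of_below_mul HS).
  - pose proof (below_mul_r HS (z ⊗ x) _ _
      (below_mul_l HS (x ⊗ y) _ _ (below_sandwich x (y ⊗ z)))) as h.
    rewrite !(mul_assoc HS) in h.
    replace (x ⊗ y ⊗ x ⊗ y ⊗ z ⊗ x ⊗ z ⊗ x) with (x ⊗ y ⊗ z ⊗ x) in h; [exact h|].
    transitivity (word_prod x [y; z; x; z; x]).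
    + exact (eq_sym (word_prod_square HS x [y] z [x] [])).
    + exact (eq_sym (word_prod_square_head HS x [y] [z; x; z; x])).
  - pose proof (below_mul_r HS (y ⊗ z ⊗ x) _ _ (below_sandwich x (y ⊗ x ⊗ z))) as h.
    rewrite !(mul_assoc HS) in h. rewrite !(mul_assoc HS).
    replace (x ⊗ y ⊗ x ⊗ z ⊗ x ⊗ x ⊗ y ⊗ z ⊗ x) with (x ⊗ y ⊗ x ⊗ z ⊗ x ⊗ y ⊗ z ⊗ x);
      [exact h | exact (eq_sym (word_prod_square HS x [y; x; z] x [] [y; z; x]))].
  - pose proof (below_mul_l HS (x ⊗ y ⊗ z) _ _ (below_sandwich x (y ⊗ x ⊗ z))) as h.
    rewrite !(mul_assoc HS) in h. rewrite !(mul_assoc HS).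
    replace (x ⊗ y ⊗ z ⊗ x ⊗ x ⊗ y ⊗ x ⊗ z ⊗ x) with (x ⊗ y ⊗ z ⊗ x ⊗ y ⊗ x ⊗ z ⊗ x);
      [exact h | exact (eq_sym (word_prod_square HS x [y; z] x [] [y; x; z; x]))].
  - rewrite !(mul_assoc HS).
    transitivity (word_prod x [y; x; z; x; y; z; x; x; y; x; z; x]);
      [exact (word_prod_square HS x [y; x; z] x [] [y; z; x; x; y; x; z; x])|].
    transitivity (word_prod x [y; x; z; x; y; z; x; y; x; z; x]);
      [exact (word_prod_square HS x [y; x; z; x; y; z] x [] [y; x; z; x])|].
    transitivity (word_prod x [y; x; z; x; y; x; z; x]);
      [exact (word_prod_square HS x [y; x] z [x; y] [x; z; x])|].
    exact (word_prod_square_head HS x [y; x; z] [x]).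
Qed.

Lemma greenR_mul_absorb (x y z : S) : greenR x y -> x ⊗ z ⊗ (y ⊗ z) = y ⊗ z.
Proof.
  intros [hxy hyx].
  assert (sq : x ⊗ z ⊗ (y ⊗ z) ⊗ (y ⊗ z) = x ⊗ z ⊗ (y ⊗ z)).
  { rewrite !(mul_assoc HS). exact (word_prod_square HS x [z] y [z] []). }
  assert (hy : x ⊗ z ⊗ (y ⊗ z) ⊗ y = y ⊗ z ⊗ y).
  { pose proof (mul_regular y (x ⊗ z) z) as hreg. rewrite !(mul_assoc HS) in hreg.
    rewrite <- hyx at 1. rewrite !(mul_assoc HS), hreg.
    transitivity (y ⊗ x ⊗ z ⊗ y); [exact (word_prod_square HS y [x] z [] [y])|].
    rewrite <- (mul_regular y x z), hyx, hxy. reflexivity. }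
  rewrite <- sq, (mul_assoc HS), hy, <- (mul_assoc HS), (mul_idem HS). reflexivity.
Qed.

Lemma greenR_mul_eq (x y z : S) : greenR x y -> x ⊗ z = y ⊗ z.
Proof.
  intros hR. pose proof hR as [hxy hyx].
  apply below_antisym.
  - pose proof (below_mul_l HS x _ _ (below_sandwich z y)) as h.
    rewrite !(mul_assoc HS), <- (mul_assoc HS (x ⊗ z)), (greenR_mul_absorb x y z hR) in h.
    exact h.
  - pose proof (below_mul_l HS y _ _ (below_sandwich z x)) as h.
    rewrite !(mul_assoc HS), <- (mul_assoc HS (y ⊗ z)),
      (greenR_mul_absorb y x z (conj hyx hxy)) in h.
    exact h.
Qed.

End VarietyD.

Definition opposite (S : alg22) : alg22 :=
  Alg22 (car S) (@sadd S) (fun a b => @smul S b a).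

Lemma in_VD_opposite (S : alg22) : in_VD S -> in_VD (opposite S).
Proof.
  intros HV. pose proof (proj1 HV) as HS.
  split; [repeat split|]; cbn; intros.
  - apply (add_assoc HS).
  - apply (add_idem HS).
  - symmetry; apply (mul_assoc HS).
  - apply (mul_idem HS).
  - apply (mul_add_distr_r HS).
  - apply (mul_add_distr_l HS).
  - rewrite (mul_assoc HS). apply (in_VD_identity S HV).
Qed.

Lemma greenL_mul_eq (S : alg22) (HV : in_VD S) (x y z : S) :
  greenL x y -> z ⊗ x = z ⊗ y.
Proof.
  intros [hxy hyx].
  exact (greenR_mul_eq (opposite S) (in_VD_opposite S HV) x y z (conj hyx hxy)).
Qed.

Lemma idem_semiring_image (S T : alg22) (g : S -> T) :
  idem_semiring S -> is_hom S T g -> surjective g -> idem_semiring T.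
Proof.
  intros [h1 [h2 [h3 [h4 [h5 h6]]]]] [gadd gmul] gsurj.
  repeat split; intros;
  repeat match goal with v : car T |- _ => destruct (gsurj v) as [? <-]; clear v end;
  repeat (rewrite <- gadd || rewrite <- gmul); f_equal; auto.
Qed.

Record congruence {S : alg22} (E : S -> S -> Prop) : Prop := {
  cong_refl : forall x, E x x;
  cong_sym : forall x y, E x y -> E y x;
  cong_trans : forall x y z, E x y -> E y z -> E x z;
  cong_add : forall a a' b b', E a a' -> E b b' -> E (a ⊕ b) (a' ⊕ b');
  cong_mul : forall a a' b b', E a a' -> E b b' -> E (a ⊗ b) (a' ⊗ b') }.

Section Quotient.
Context {S : alg22} (E : S -> S -> Prop).

(* A class is a predicate that is extensionally some [E x]; the operations act on
   representatives chosen by indefinite description. *)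
Definition qclass : Type := {P : S -> Prop | exists x, P = E x}.
Definition qproj (x : S) : qclass := exist _ (E x) (ex_intro _ x eq_refl).
Definition qrepr (P : qclass) : S :=
  proj1_sig (constructive_indefinite_description _ (proj2_sig P)).

Definition quotient : alg22 :=
  Alg22 qclass (fun P P' => qproj (qrepr P ⊕ qrepr P'))
               (fun P P' => qproj (qrepr P ⊗ qrepr P')).

Lemma qproj_qrepr (P : qclass) : qproj (qrepr P) = P.
Proof.
  destruct P as [P hP]. unfold qproj, qrepr. apply eq_sig_hprop.
  - intros; apply proof_irrelevance.
  - cbn. destruct (constructive_indefinite_description _ hP) as [x ->]. reflexivity.
Qed.

Lemma qproj_surj : surjective (qproj : S -> quotient).
Proof. intro P. exists (qrepr P). apply qproj_qrepr. Qed.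

Lemma qproj_ind (Q : quotient -> Prop) : (forall x, Q (qproj x)) -> forall P, Q P.
Proof. intros h P. rewrite <- (qproj_qrepr P). apply h. Qed.

Hypothesis C : congruence E.

Lemma qproj_eq (x y : S) : qproj x = qproj y <-> E x y.
Proof.
  split.
  - intro h. apply (f_equal (@proj1_sig _ _)) in h. cbn in h.
    rewrite h. apply (cong_refl _ C).
  - intro h. apply eq_sig_hprop; [intros; apply proof_irrelevance|]. cbn.
    apply functional_extensionality; intro z. apply propositional_extensionality.
    destruct C as [_ Csym Ctrans _ _]. split; intro k; eauto.
Qed.

Lemma qrepr_qproj (x : S) : E (qrepr (qproj x)) x.
Proof. apply qproj_eq. apply qproj_qrepr. Qed.

Lemma qproj_add (x y : S) : qproj (x ⊕ y) = sadd (a := quotient) (qproj x) (qproj y).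
Proof. apply qproj_eq, (cong_add E C); apply (cong_sym _ C), qrepr_qproj. Qed.

Lemma qproj_mul (x y : S) : qproj (x ⊗ y) = smul (a := quotient) (qproj x) (qproj y).
Proof. apply qproj_eq, (cong_mul E C); apply (cong_sym _ C), qrepr_qproj. Qed.

Lemma qproj_hom : is_hom S quotient qproj.
Proof. split; [exact qproj_add | exact qproj_mul]. Qed.

Lemma quotient_idem_semiring : idem_semiring S -> idem_semiring quotient.
Proof. intro HS. exact (idem_semiring_image S quotient qproj HS qproj_hom qproj_surj). Qed.

End Quotient.

Lemma quotient_factor {S : alg22} (E E' : S -> S -> Prop) :
  congruence E -> congruence E' -> (forall x y, E x y -> E' x y) ->
  exists phi : quotient E -> quotient E',
    is_hom _ _ phi /\ surjective phi /\ forall x, phi (qproj E x) = qproj E' x.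
Proof.
  intros C C' sub.
  exists (fun P => qproj E' (qrepr E P)).
  assert (hphi : forall x, qproj E' (qrepr E (qproj E x)) = qproj E' x).
  { intro x. apply (qproj_eq E' C'), sub, (qrepr_qproj E C). }
  split; [|split; [|exact hphi]].
  - split; intro P; pattern P; apply qproj_ind; intros x P'; pattern P';
      apply qproj_ind; intro y.
    + rewrite <- (qproj_add E C), !hphi. apply (qproj_add E' C').
    + rewrite <- (qproj_mul E C), !hphi. apply (qproj_mul E' C').
  - intro P'. pattern P'. apply qproj_ind. intro x. exists (qproj E x). apply hphi.
Qed.

(* In any idempotent
   semiring [kerR x y] forces [greenR x y] (take [s := y] and [s := x]), and on V_D
   the converse holds by [greenR_mul_eq]; similarly for L and D.  Defined through
   the actions, they are visibly congruences. *)
Definition kerR {S : alg22} (x y : S) : Prop := forall s, x ⊗ s = y ⊗ s.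
Definition kerL {S : alg22} (x y : S) : Prop := forall s, s ⊗ x = s ⊗ y.
Definition kerD {S : alg22} (x y : S) : Prop := forall s t, s ⊗ x ⊗ t = s ⊗ y ⊗ t.

Section Kernels.
Context {S : alg22} (HS : idem_semiring S).

Lemma kerR_congruence : congruence (@kerR S).
Proof.
  split; unfold kerR.
  - reflexivity.
  - intros x y h s. symmetry; auto.
  - intros x y z h h' s. congruence.
  - intros x x' y y' hx hy s. rewrite !(mul_add_distr_r HS). congruence.
  - intros x x' y y' hx hy s. rewrite <- !(mul_assoc HS). congruence.
Qed.

Lemma kerL_congruence : congruence (@kerL S).
Proof.
  split; unfold kerL.
  - reflexivity.
  - intros x y h s. symmetry; auto.
  - intros x y z h h' s. congruence.
  - intros x x' y y' hx hy s. rewrite !(mul_add_distr_l HS). congruence.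
  - intros x x' y y' hx hy s. rewrite !(mul_assoc HS). congruence.
Qed.

Lemma kerD_congruence : congruence (@kerD S).
Proof.
  split; unfold kerD.
  - reflexivity.
  - intros x y h s t. symmetry; auto.
  - intros x y z h h' s t. congruence.
  - intros x x' y y' hx hy s t.
    rewrite !(mul_add_distr_l HS), !(mul_add_distr_r HS). congruence.
  - intros x x' y y' hx hy s t.
    rewrite !(mul_assoc HS), <- !(mul_assoc HS _ _ t), hx, !(mul_assoc HS). apply hy.
Qed.

Lemma kerR_kerD (x y : S) : kerR x y -> kerD x y.
Proof. intros h s t. rewrite <- !(mul_assoc HS s). congruence. Qed.

Lemma kerL_kerD (x y : S) : kerL x y -> kerD x y.
Proof. intros h s t. congruence. Qed.

Lemma kerR_kerL_eq (x y : S) : kerR x y -> kerL x y -> x = y.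
Proof. intros hR hL. rewrite <- (mul_idem HS x), hR, hL, (mul_idem HS). reflexivity. Qed.

Lemma kerD_mul_kerR (x y : S) : kerD x y -> kerR (x ⊗ y) x.
Proof. intros h s. rewrite <- (h x s), (mul_idem HS). reflexivity. Qed.

Lemma kerD_mul_kerL (x y : S) : kerD x y -> kerL (x ⊗ y) y.
Proof.
  intros h s. rewrite (mul_assoc HS), (h s y), <- (mul_assoc HS), (mul_idem HS).
  reflexivity.
Qed.

End Kernels.

Section KernelsVD.
Variable S : alg22.
Hypothesis HV : in_VD S.
Let HS : idem_semiring S := proj1 HV.

Lemma greenD_kerD (u v : S) : greenD u v -> kerD u v.
Proof.
  intros [huvu hvuv] s t.
  assert (hR : greenR u (u ⊗ v)).
  { split; [rewrite (mul_assoc HS), (mul_idem HS); reflexivity | exact huvu]. }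
  assert (hL : greenL (u ⊗ v) v).
  { split; [rewrite <- (mul_assoc HS), (mul_idem HS); reflexivity|].
    rewrite (mul_assoc HS). exact hvuv. }
  rewrite <- (mul_assoc HS s u t), (greenR_mul_eq S HV u (u ⊗ v) t hR).
  rewrite (mul_assoc HS), (mul_assoc HS), <- (mul_assoc HS s u v).
  rewrite (greenL_mul_eq S HV (u ⊗ v) v s hL). reflexivity.
Qed.

Lemma kerD_mul_comm (x y : S) : kerD (x ⊗ y) (y ⊗ x).
Proof.
  assert (h : forall a b : S, a ⊗ b ⊗ (b ⊗ a) ⊗ (a ⊗ b) = a ⊗ b).
  { intros a b. rewrite !(mul_assoc HS).
    transitivity (word_prod a [b; a; a; b]); [exact (word_prod_square HS a [] b [] [a; a; b])|].
    transitivity (word_prod a [b; a; b]); [exact (word_prod_square HS a [b] a [] [b])|].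
    exact (word_prod_square_head HS a [b] []). }
  apply greenD_kerD. split; apply h.
Qed.

Lemma kerD_add_mul (x y : S) : kerD (x ⊕ x ⊗ y) x.
Proof.
  assert (e1 : (x ⊕ x ⊗ y) ⊗ x = x).
  { rewrite (mul_add_distr_r HS), (mul_idem HS). apply (add_sandwich S HV). }
  assert (e2 : x ⊗ (x ⊕ x ⊗ y) = x ⊕ x ⊗ y).
  { rewrite (mul_add_distr_l HS), (mul_idem HS), (mul_assoc HS), (mul_idem HS).
    reflexivity. }
  apply greenD_kerD. split; congruence.
Qed.

Lemma kerD_mul_add (x y : S) : kerD (x ⊗ y ⊕ x) x.
Proof.
  assert (e1 : (x ⊗ y ⊕ x) ⊗ x = x).
  { rewrite (mul_add_distr_r HS), (mul_idem HS). apply (sandwich_add S HV). }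
  assert (e2 : x ⊗ (x ⊗ y ⊕ x) = x ⊗ y ⊕ x).
  { rewrite (mul_add_distr_l HS), (mul_idem HS), (mul_assoc HS), (mul_idem HS).
    reflexivity. }
  apply greenD_kerD. split; congruence.
Qed.

Lemma kerD_add_mul_swap (x y : S) : kerD (x ⊕ y) ((x ⊕ y) ⊗ (y ⊕ x)).
Proof.
  pose proof (kerD_congruence HS) as C.
  replace ((x ⊕ y) ⊗ (y ⊕ x)) with ((x ⊗ y ⊕ x) ⊕ (y ⊕ y ⊗ x)).
  - apply (cong_sym _ C), (cong_add _ C); [apply kerD_mul_add | apply kerD_add_mul].
  - rewrite (mul_add_distr_r HS), !(mul_add_distr_l HS), !(mul_idem HS).
    rewrite !(add_assoc HS). reflexivity.
Qed.

Lemma kerD_add_comm (x y : S) : kerD (x ⊕ y) (y ⊕ x).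
Proof.
  pose proof (kerD_congruence HS) as C.
  apply (cong_trans _ C _ _ _ (kerD_add_mul_swap x y)).
  apply (cong_trans _ C _ _ _ (kerD_mul_comm _ _)).
  apply (cong_sym _ C), kerD_add_mul_swap.
Qed.

End KernelsVD.

Ltac push_qproj C :=
  repeat (rewrite <- (qproj_add _ C) || rewrite <- (qproj_mul _ C)).

Section Decomposition.
Variable S : alg22.
Hypothesis HV : in_VD S.
Let HS : idem_semiring S := proj1 HV.

Lemma quotient_kerD_distr_lattice : distr_lattice (quotient (@kerD S)).
Proof.
  pose proof (kerD_congruence HS) as C.
  split; [exact (quotient_idem_semiring _ C HS)|].
  repeat split; intros P P'; pattern P; apply qproj_ind; intro x;
    pattern P'; apply qproj_ind; intro y; push_qproj C; apply (qproj_eq _ C).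
  - apply (kerD_add_comm S HV).
  - apply (kerD_mul_comm S HV).
  - apply (kerD_add_mul S HV).
  - rewrite (mul_add_distr_l HS), (mul_idem HS). apply (kerD_add_mul S HV).
Qed.

Lemma kerR_in_VL_identity (x y : S) : kerR x (x ⊗ y ⊕ x ⊕ x ⊗ y).
Proof.
  intro s. apply (greenR_mul_eq S HV). split.
  - rewrite !(mul_add_distr_l HS), !(mul_assoc HS), (mul_idem HS). reflexivity.
  - rewrite !(mul_add_distr_r HS), (mul_idem HS). symmetry. apply (in_VD_identity S HV).
Qed.

Lemma kerL_in_VR_identity (x y : S) : kerL x (y ⊗ x ⊕ x ⊕ y ⊗ x).
Proof.
  intro s. apply (greenL_mul_eq S HV). split.
  - rewrite !(mul_add_distr_l HS), !(mul_assoc HS), (mul_idem HS). symmetry.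
    apply (in_VD_identity S HV).
  - rewrite !(mul_add_distr_r HS), <- !(mul_assoc HS), (mul_idem HS). reflexivity.
Qed.

Lemma quotient_kerR_in_VL : in_VL (quotient (@kerR S)).
Proof.
  pose proof (kerR_congruence HS) as C.
  split; [exact (quotient_idem_semiring _ C HS)|].
  intros P P'; pattern P; apply qproj_ind; intro x; pattern P'; apply qproj_ind; intro y.
  push_qproj C. apply (qproj_eq _ C), kerR_in_VL_identity.
Qed.

Lemma quotient_kerL_in_VR : in_VR (quotient (@kerL S)).
Proof.
  pose proof (kerL_congruence HS) as C.
  split; [exact (quotient_idem_semiring _ C HS)|].
  intros P P'; pattern P; apply qproj_ind; intro x; pattern P'; apply qproj_ind; intro y.
  push_qproj C. apply (qproj_eq _ C), kerL_in_VR_identity.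
Qed.

Lemma qproj_pair_iso_onto_spined
    (phi1 : quotient (@kerR S) -> quotient (@kerD S))
    (phi2 : quotient (@kerL S) -> quotient (@kerD S)) :
  (forall x, phi1 (qproj kerR x) = qproj kerD x) ->
  (forall x, phi2 (qproj kerL x) = qproj kerD x) ->
  iso_onto_spined S _ _ _ phi1 phi2 (fun x => (qproj kerR x, qproj kerL x)).
Proof.
  intros fac1 fac2.
  pose proof (kerR_congruence HS) as CR. pose proof (kerL_congruence HS) as CL.
  pose proof (kerD_congruence HS) as CD.
  split; [|split; [|split]].
  - intros x y. cbn [fst snd]. f_equal; [apply (qproj_add _ CR) | apply (qproj_add _ CL)].
  - intros x y. cbn [fst snd]. f_equal; [apply (qproj_mul _ CR) | apply (qproj_mul _ CL)].
  - intros x y e. apply (kerR_kerL_eq HS).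
    + apply (qproj_eq _ CR), (f_equal fst e).
    + apply (qproj_eq _ CL), (f_equal snd e).
  - intros [P P']. cbn [fst snd]. split.
    + pattern P; apply qproj_ind; intro a; pattern P'; apply qproj_ind; intro b.
      rewrite fac1, fac2. intro e. apply (qproj_eq _ CD) in e.
      exists (a ⊗ b). f_equal.
      * apply (qproj_eq _ CR), (kerD_mul_kerR HS), e.
      * apply (qproj_eq _ CL), (kerD_mul_kerL HS), e.
    + intros [x e]. injection e as <- <-. rewrite fac1, fac2. reflexivity.
Qed.

End Decomposition.

(* Only the embedding into [S1 * S2] matters: the V_D identity holds componentwise,
   since on V_L and V_R it is an instance of the defining identity. *)
Lemma in_VD_of_iso_onto_spined (S S1 S2 D : alg22) (phi1 : S1 -> D) (phi2 : S2 -> D)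
    (f : S -> (S1 * S2)%type) :
  idem_semiring S -> in_VL S1 -> in_VR S2 -> iso_onto_spined S S1 S2 D phi1 phi2 f ->
  in_VD S.
Proof.
  intros HS VL VR (fadd & fmul & finj & _).
  split; [exact HS|]. intros x y. apply finj.
  rewrite !fadd, !fmul. cbn [fst snd].
  rewrite (surjective_pairing (f x)) at 1. f_equal.
  - pose proof (proj2 VL (fst (f x)) (fst (f y) ⊗ fst (f x))) as h.
    rewrite (mul_assoc (proj1 VL)) in h. exact h.
  - exact (proj2 VR (snd (f x)) (snd (f x) ⊗ snd (f y))).
Qed.

Theorem theorem4p9 (S : alg22) (HS : idem_semiring S) :
  in_VD S <->
  exists (S1 S2 D : alg22) (phi1 : S1 -> D) (phi2 : S2 -> D)
         (f : S -> (S1 * S2)%type),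
    in_VL S1 /\ in_VR S2 /\ distr_lattice D /\
    is_hom S1 D phi1 /\ surjective phi1 /\
    is_hom S2 D phi2 /\ surjective phi2 /\
    iso_onto_spined S S1 S2 D phi1 phi2 f.
Proof.
  split.
  - intro HV.
    destruct (quotient_factor _ _ (kerR_congruence HS) (kerD_congruence HS) (kerR_kerD HS))
      as (phi1 & hom1 & surj1 & fac1).
    destruct (quotient_factor _ _ (kerL_congruence HS) (kerD_congruence HS) kerL_kerD)
      as (phi2 & hom2 & surj2 & fac2).
    exists (quotient kerR), (quotient kerL), (quotient kerD), phi1, phi2,
      (fun x => (qproj kerR x, qproj kerL x)).
    exact (conj (quotient_kerR_in_VL S HV) (conj (quotient_kerL_in_VR S HV)
      (conj (quotient_kerD_distr_lattice S HV) (conj hom1 (conj surj1 (conj hom2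
      (conj surj2 (qproj_pair_iso_onto_spined S HV phi1 phi2 fac1 fac2)))))))).
  - intros (S1 & S2 & D & phi1 & phi2 & f & VL & VR & _ & _ & _ & _ & _ & iso).
    exact (in_VD_of_iso_onto_spined S S1 S2 D phi1 phi2 f HS VL VR iso).
Qed.
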